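(* Let $M>1$ and let $Q$ be an indefinite ternary quadratic form of Diophantine type $M$ with $\det Q=1$. Then there exists $0<\eta<1$ such that for every $R>10$ the set $\{v\in\Delta_Q\cap\mathcal{H}_{\eta,M}: R\le\|v\|<R^2\}$ is contained in the union of at most six planes through the origin.
   Context: $\|\cdot\|$ is the supremum norm on $\mathbb{R}^3$; for quadratic forms $\|Q\|$ is the maximal absolute value of coefficients. $Q_0(v)=v_2^2-2v_1v_3$. Fix $g\in\mathrm{SL}_3(\mathbb{R})$ with $Q(v)=Q_0(gv)$ for all $v$ and set $\Delta_Q=g\mathbb{Z}^3$. $Q$ is of Diophantine type $M$ if there is $c>0$ with $\|Q-\rho Q'\|>c\|Q'\|^{-M}$ for every nonzero integral ternary quadratic form $Q'$, $\rho=(\det Q')^{-1/3}$. $\mathcal{H}_{\eta,M}=\{v\in\mathbb{R}^3:|Q_0(v)|<\eta\|v\|^{-50M}\}$. *)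

From Stdlib Require Import Reals List.
Open Scope R_scope.

Definition vec : Type := (R * R * R)%type.
Definition mat3 : Type := (vec * vec * vec)%type.

Definition dot (a b : vec) : R :=
  let '(a1, a2, a3) := a in let '(b1, b2, b3) := b in a1 * b1 + a2 * b2 + a3 * b3.

Definition supn (v : vec) : R :=
  let '(x, y, z) := v in Rmax (Rabs x) (Rmax (Rabs y) (Rabs z)).

Definition mapply (g : mat3) (v : vec) : vec :=
  let '(r1, r2, r3) := g in (dot r1 v, dot r2 v, dot r3 v).

Definition det3 (g : mat3) : R :=
  let '((a, b, c), (d, e, f), (h, i, j)) := g in
  a * (e * j - f * i) - b * (d * j - f * h) + c * (d * i - e * h).

Record qform := QF { c11 : R; c22 : R; c33 : R; c12 : R; c13 : R; c23 : R }.

Definition qeval (Q : qform) (v : vec) : R :=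
  let '(x, y, z) := v in
  c11 Q * x ^ 2 + c22 Q * y ^ 2 + c33 Q * z ^ 2
  + c12 Q * x * y + c13 Q * x * z + c23 Q * y * z.

Definition Q0 (v : vec) : R := let '(v1, v2, v3) := v in v2 ^ 2 - 2 * v1 * v3.

Definition qnorm (Q : qform) : R :=
  Rmax (Rabs (c11 Q)) (Rmax (Rabs (c22 Q)) (Rmax (Rabs (c33 Q))
    (Rmax (Rabs (c12 Q)) (Rmax (Rabs (c13 Q)) (Rabs (c23 Q)))))).

Definition qsub (Q Q' : qform) : qform :=
  QF (c11 Q - c11 Q') (c22 Q - c22 Q') (c33 Q - c33 Q')
     (c12 Q - c12 Q') (c13 Q - c13 Q') (c23 Q - c23 Q').

Definition qscale (r : R) (Q : qform) : qform :=
  QF (r * c11 Q) (r * c22 Q) (r * c33 Q) (r * c12 Q) (r * c13 Q) (r * c23 Q).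

(* Determinant of a quadratic form, normalized so that det Q0 = 1:
   minus the determinant of the symmetric Gram matrix A with Q(v) = v^T A v. *)
Definition qdet (Q : qform) : R :=
  let a := c11 Q in let b := c22 Q in let c := c33 Q in
  let d := c12 Q / 2 in let e := c13 Q / 2 in let f := c23 Q / 2 in
  - (a * (b * c - f * f) - d * (d * c - f * e) + e * (d * f - b * e)).

Definition indefinite (Q : qform) : Prop :=
  (exists v, 0 < qeval Q v) /\ (exists w, qeval Q w < 0).

Definition integral (Q : qform) : Prop :=
  exists a b c d e f : Z,
    Q = QF (IZR a) (IZR b) (IZR c) (IZR d) (IZR e) (IZR f).

Definition qzero : qform := QF 0 0 0 0 0 0.

Definition cbrt (x : R) : R :=
  if Rlt_dec 0 x then Rpower x (1 / 3)
  else if Rlt_dec x 0 then - Rpower (- x) (1 / 3) else 0.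

Definition dioph_type (Q : qform) (M : R) : Prop :=
  exists c : R, 0 < c /\
    forall Q' : qform, integral Q' -> Q' <> qzero -> qdet Q' <> 0 ->
      let rho := cbrt (/ qdet Q') in
      qnorm (qsub Q (qscale rho Q')) > c * Rpower (qnorm Q') (- M).

Definition in_lattice (g : mat3) (v : vec) : Prop :=
  exists a b c : Z, v = mapply g (IZR a, IZR b, IZR c).

Definition in_H (eta M : R) (v : vec) : Prop :=
  Rabs (Q0 v) < eta * Rpower (supn v) (- (50 * M)).

Definition vzero : vec := (0, 0, 0).

(* If the window R <= |v| < R^2 of Delta_Q contained five points of H_{eta,M} in general
   position (no three on a plane through 0), write them as g w_i with integral w_i of height
   O(R^2) and |Q(w_i)| <= eta R^(-50M).  The bracket equation of the conic through the w_i is a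
   nonzero integral form Q' of height O(R^20), and an interpolation identity expresses
   Q - lam Q' through the small values Q(w_i), so Q is within O(eta R^(20-50M)) of lam Q'.
   As det Q = 1, lam may be replaced by (det Q')^(-1/3), and for small eta this contradicts
   the Diophantine bound ||Q - rho Q'|| > c ||Q'||^(-M) >> R^(-20M).  Without five points in
   general position, three independent points and possibly a fourth point off their three
   planes leave every point on one of at most six planes spanned by pairs of them. *)

From Stdlib Require Import Reals List Lra Lia Psatz ZArith Classical.
Import ListNotations.
Open Scope R_scope.

Ltac split_vecs :=
  repeat match goal with
  | v : vec |- _ => destruct v as [[? ?] ?]
  | g : mat3 |- _ => destruct g as [[[[? ?] ?] [[? ?] ?]] [[? ?] ?]]
  | Q : qform |- _ => destruct Q
  end.

Lemma Rabs_add_le x y a b : Rabs x <= a -> Rabs y <= b -> Rabs (x + y) <= a + b.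
Proof. intros; eapply Rle_trans; [apply Rabs_triang | lra]. Qed.

Lemma Rabs_sub_le x y a b : Rabs x <= a -> Rabs y <= b -> Rabs (x - y) <= a + b.
Proof. intros; eapply Rle_trans; [apply Rabs_triang | rewrite Rabs_Ropp; lra]. Qed.

Lemma Rabs_mul_le x y a b : Rabs x <= a -> Rabs y <= b -> Rabs (x * y) <= a * b.
Proof. intros; rewrite Rabs_mult; apply Rmult_le_compat; auto using Rabs_pos. Qed.

Lemma Rabs_opp_le x a : Rabs x <= a -> Rabs (- x) <= a.
Proof. now rewrite Rabs_Ropp. Qed.

Ltac abs_bound :=
  eapply Rle_trans;
  [ repeat first [ eassumption | eapply Rabs_add_le | eapply Rabs_sub_le
                 | eapply Rabs_mul_le | eapply Rabs_opp_le | apply Rle_refl ] | ].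

Lemma Rpower_le_base_nonpos a b y : 0 < a <= b -> y <= 0 -> Rpower b y <= Rpower a y.
Proof.
  intros Hab Hy.
  pose proof (Rle_Rpower_l a b (- y) ltac:(lra) Hab).
  replace y with (- - y) by ring; rewrite !(Rpower_Ropp _ (- y)).
  apply Rinv_le_contravar; [apply exp_pos | assumption].
Qed.

Lemma exists_small_pos A B : 0 <= A -> 0 <= B ->
  exists eta, 0 < eta < 1 /\ A * eta < 1 /\ B * eta < 1.
Proof.
  intros HA HB. set (D := A + B + 2). exists (/ D).
  assert (Hlt : forall x, 0 <= x <= D - 1 -> x * / D < 1).
  { intros x Hx. apply (Rmult_lt_reg_r D); [unfold D; lra|].
    rewrite Rmult_assoc, Rinv_l by (unfold D; lra). lra. }
  repeat split.
  - apply Rinv_0_lt_compat; unfold D; lra.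
  - rewrite <- (Rmult_1_l (/ D)); apply Hlt; unfold D; lra.
  - apply Hlt; unfold D; lra.
  - apply Hlt; unfold D; lra.
Qed.

Definition cross (a b : vec) : vec :=
  let '(a1, a2, a3) := a in let '(b1, b2, b3) := b in
  (a2 * b3 - a3 * b2, a3 * b1 - a1 * b3, a1 * b2 - a2 * b1).

Definition triple (a b c : vec) : R := dot (cross a b) c.

Lemma dot_vzero_l v : dot vzero v = 0.
Proof. split_vecs; simpl; ring. Qed.

Lemma triple_mapply g a b c :
  triple (mapply g a) (mapply g b) (mapply g c) = det3 g * triple a b c.
Proof. split_vecs; unfold triple; simpl; ring. Qed.

Lemma triple_neq0_cross a b c : triple a b c <> 0 ->
  cross a b <> vzero /\ cross a c <> vzero /\ cross b c <> vzero.
Proof.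
  intros H.
  assert (Eac : triple a b c = - dot (cross a c) b) by (split_vecs; unfold triple; simpl; ring).
  assert (Ebc : triple a b c = dot (cross b c) a) by (split_vecs; unfold triple; simpl; ring).
  repeat split; intros E; apply H;
    [unfold triple | rewrite Eac | rewrite Ebc]; rewrite E, dot_vzero_l; ring.
Qed.

Lemma triple_eq0_of_cross_eq0 a e v : cross a v = vzero -> triple a e v = 0.
Proof.
  intros H.
  replace (triple a e v) with (- dot (cross a v) e) by (split_vecs; unfold triple; simpl; ring).
  rewrite H, dot_vzero_l; ring.
Qed.

Lemma cross_neq0_exists a : a <> vzero -> exists e, cross a e <> vzero.
Proof.
  intros Ha. apply NNPP; intros Hno.
  assert (He : forall e, cross a e = vzero) by (intro e; apply NNPP; eauto).
  apply Ha. destruct a as [[x y] z].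
  pose proof (He (1, 0, 0)) as H1; pose proof (He (0, 1, 0)) as H2.
  simpl in H1, H2; unfold vzero in *.
  injection H1; injection H2; intros; f_equal; [f_equal|]; lra.
Qed.

Lemma supn_coords x y z :
  Rabs x <= supn (x, y, z) /\ Rabs y <= supn (x, y, z) /\ Rabs z <= supn (x, y, z).
Proof.
  unfold supn; repeat split.
  - apply Rmax_l.
  - eapply Rle_trans; [apply Rmax_l | apply Rmax_r].
  - eapply Rle_trans; [apply Rmax_r | apply Rmax_r].
Qed.

Lemma supn_le x y z s : Rabs x <= s -> Rabs y <= s -> Rabs z <= s -> supn (x, y, z) <= s.
Proof. intros; unfold supn; repeat apply Rmax_lub; assumption. Qed.

Lemma supn_nonneg v : 0 <= supn v.
Proof.
  destruct v as [[x y] z]; destruct (supn_coords x y z) as [H _].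
  pose proof (Rabs_pos x); lra.
Qed.

Ltac supn_coords_all :=
  repeat match goal with
  | |- context [supn (?x, ?y, ?z)] =>
      lazymatch goal with
      | _ : Rabs x <= supn (x, y, z) |- _ => fail
      | _ => destruct (supn_coords x y z) as (? & ? & ?)
      end
  end.

Lemma supn_cross_le a b : supn (cross a b) <= 2 * supn a * supn b.
Proof.
  destruct a as [[a1 a2] a3], b as [[b1 b2] b3]; supn_coords_all.
  simpl cross; apply supn_le; abs_bound; lra.
Qed.

Lemma Rabs_dot_le a b : Rabs (dot a b) <= 3 * supn a * supn b.
Proof.
  destruct a as [[a1 a2] a3], b as [[b1 b2] b3]; supn_coords_all.
  simpl dot; abs_bound; lra.
Qed.

Lemma Rabs_triple_le a b c : Rabs (triple a b c) <= 6 * supn a * supn b * supn c.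
Proof.
  unfold triple. eapply Rle_trans; [apply Rabs_dot_le|].
  pose proof (supn_cross_le a b). pose proof (supn_nonneg c). nra.
Qed.

Definition qadd (A B : qform) : qform :=
  QF (c11 A + c11 B) (c22 A + c22 B) (c33 A + c33 B)
     (c12 A + c12 B) (c13 A + c13 B) (c23 A + c23 B).

Definition prod_lin (a b : vec) : qform :=
  let '(a1, a2, a3) := a in let '(b1, b2, b3) := b in
  QF (a1 * b1) (a2 * b2) (a3 * b3)
     (a1 * b2 + a2 * b1) (a1 * b3 + a3 * b1) (a2 * b3 + a3 * b2).

Lemma qform_ext A B :
  c11 A = c11 B -> c22 A = c22 B -> c33 A = c33 B ->
  c12 A = c12 B -> c13 A = c13 B -> c23 A = c23 B -> A = B.
Proof. destruct A, B; simpl; intros -> -> -> -> -> ->; reflexivity. Qed.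

Ltac le_rmax :=
  first [ apply Rmax_l | apply Rle_refl | eapply Rle_trans; [| apply Rmax_r]; le_rmax ].

Lemma qnorm_coefs A :
  Rabs (c11 A) <= qnorm A /\ Rabs (c22 A) <= qnorm A /\ Rabs (c33 A) <= qnorm A /\
  Rabs (c12 A) <= qnorm A /\ Rabs (c13 A) <= qnorm A /\ Rabs (c23 A) <= qnorm A.
Proof. unfold qnorm; repeat split; le_rmax. Qed.

Lemma qnorm_le A s :
  Rabs (c11 A) <= s -> Rabs (c22 A) <= s -> Rabs (c33 A) <= s ->
  Rabs (c12 A) <= s -> Rabs (c13 A) <= s -> Rabs (c23 A) <= s -> qnorm A <= s.
Proof. intros; unfold qnorm; repeat apply Rmax_lub; assumption. Qed.

Lemma qnorm_nonneg A : 0 <= qnorm A.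
Proof. destruct (qnorm_coefs A) as [H _]; pose proof (Rabs_pos (c11 A)); lra. Qed.

Lemma qnorm_pos A : A <> qzero -> 0 < qnorm A.
Proof.
  intros HA. destruct (Rlt_or_le 0 (qnorm A)) as [|Hle]; [assumption | exfalso; apply HA].
  assert (H0 : forall x, Rabs x <= qnorm A -> x = 0).
  { intros x Hx. destruct (Req_dec x 0) as [|Hx0]; [assumption|].
    pose proof (Rabs_no_R0 x Hx0); pose proof (Rabs_pos x); lra. }
  destruct (qnorm_coefs A) as (H1 & H2 & H3 & H4 & H5 & H6).
  apply qform_ext; simpl; auto.
Qed.

Lemma qnorm_add_le A B a b : qnorm A <= a -> qnorm B <= b -> qnorm (qadd A B) <= a + b.
Proof.
  intros HA HB.
  destruct (qnorm_coefs A) as (? & ? & ? & ? & ? & ?).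
  destruct (qnorm_coefs B) as (? & ? & ? & ? & ? & ?).
  apply qnorm_le; simpl; abs_bound; lra.
Qed.

Lemma qnorm_scale_le k A : qnorm (qscale k A) <= Rabs k * qnorm A.
Proof.
  destruct (qnorm_coefs A) as (? & ? & ? & ? & ? & ?).
  apply qnorm_le; simpl; abs_bound; lra.
Qed.

Lemma qnorm_le_sub A B : qnorm B <= qnorm A + qnorm (qsub A B).
Proof.
  destruct (qnorm_coefs A) as (? & ? & ? & ? & ? & ?).
  destruct (qnorm_coefs (qsub A B)) as (? & ? & ? & ? & ? & ?).
  apply qnorm_le; simpl in *;
    match goal with |- Rabs (?f B) <= _ =>
      replace (f B) with (f A - (f A - f B)) by ring end;
    abs_bound; lra.
Qed.

Lemma qnorm_prod_lin_le a b : qnorm (prod_lin a b) <= 2 * supn a * supn b.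
Proof.
  pose proof (supn_nonneg a); pose proof (supn_nonneg b).
  destruct a as [[a1 a2] a3], b as [[b1 b2] b3]; supn_coords_all.
  apply qnorm_le; cbn [prod_lin c11 c22 c33 c12 c13 c23]; abs_bound; nra.
Qed.

(** * The conic through five points *)

(* As a function of x this is [a1 a2 a3][a1 a4 a5][a2 a4 x][a3 a5 x]
   - [a1 a2 a4][a1 a3 a5][a2 a3 x][a4 a5 x], the bracket equation of the conic through
   a1, ..., a5. *)
Definition conic5 (a1 a2 a3 a4 a5 : vec) : qform :=
  qadd (qscale (triple a1 a2 a3 * triple a1 a4 a5) (prod_lin (cross a2 a4) (cross a3 a5)))
       (qscale (- (triple a1 a2 a4 * triple a1 a3 a5)) (prod_lin (cross a2 a3) (cross a4 a5))).

Definition general_position5 (a1 a2 a3 a4 a5 : vec) : Prop :=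
  triple a1 a2 a3 <> 0 /\ triple a1 a2 a4 <> 0 /\ triple a1 a2 a5 <> 0 /\
  triple a1 a3 a4 <> 0 /\ triple a1 a3 a5 <> 0 /\ triple a1 a4 a5 <> 0 /\
  triple a2 a3 a4 <> 0 /\ triple a2 a3 a5 <> 0 /\ triple a2 a4 a5 <> 0 /\
  triple a3 a4 a5 <> 0.

Definition no_general_five (P : vec -> Prop) : Prop :=
  forall a1 a2 a3 a4 a5, P a1 -> P a2 -> P a3 -> P a4 -> P a5 ->
    ~ general_position5 a1 a2 a3 a4 a5.

(* Lagrange interpolation through p, a1, ..., a5: each conic on the right vanishes at p and at
   all a_j but one.  [ring] checks the identity coefficientwise. *)
Lemma conic5_interpolation Q a1 a2 a3 a4 a5 p :
  qsub (qscale (qeval Q p) (conic5 a1 a2 a3 a4 a5))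
       (qscale (qeval (conic5 a1 a2 a3 a4 a5) p) Q) =
  qadd (qscale (qeval Q a1) (conic5 p a2 a3 a4 a5))
  (qadd (qscale (qeval Q a2) (conic5 a1 p a3 a4 a5))
  (qadd (qscale (qeval Q a3) (conic5 a1 a2 p a4 a5))
  (qadd (qscale (qeval Q a4) (conic5 a1 a2 a3 p a5))
        (qscale (qeval Q a5) (conic5 a1 a2 a3 a4 p))))).
Proof. apply qform_ext; split_vecs; simpl; unfold triple; simpl; ring. Qed.

(* The point lies on the planes through a2, a4 and through a3, a5, which kills the first
   summand of [conic5]. *)
Lemma qeval_conic5_meet a1 a2 a3 a4 a5 :
  qeval (conic5 a1 a2 a3 a4 a5) (cross (cross a2 a4) (cross a3 a5)) =
  - (triple a1 a2 a4 * triple a1 a3 a5 * triple a2 a3 a4 * triple a2 a3 a5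
     * triple a2 a4 a5 * triple a3 a4 a5).
Proof. split_vecs; unfold conic5, qscale, qadd, triple; simpl; ring. Qed.

Lemma qeval_qzero v : qeval qzero v = 0.
Proof. split_vecs; simpl; ring. Qed.

Lemma conic5_neq0 a1 a2 a3 a4 a5 :
  general_position5 a1 a2 a3 a4 a5 -> conic5 a1 a2 a3 a4 a5 <> qzero.
Proof.
  intros (_ & H124 & _ & _ & H135 & _ & H234 & H235 & H245 & H345) H0.
  pose proof (qeval_conic5_meet a1 a2 a3 a4 a5) as E.
  rewrite H0, qeval_qzero in E.
  assert (triple a1 a2 a4 * triple a1 a3 a5 * triple a2 a3 a4 * triple a2 a3 a5
          * triple a2 a4 a5 * triple a3 a4 a5 <> 0).
  { repeat apply Rmult_integral_contrapositive_currified; assumption. }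
  lra.
Qed.

Lemma qnorm_conic5_le a1 a2 a3 a4 a5 S :
  supn a1 <= S -> supn a2 <= S -> supn a3 <= S -> supn a4 <= S -> supn a5 <= S ->
  qnorm (conic5 a1 a2 a3 a4 a5) <= 576 * S ^ 10.
Proof.
  intros H1 H2 H3 H4 H5.
  assert (HS : 0 <= S) by (pose proof (supn_nonneg a1); lra).
  assert (Hcross : forall a b, supn a <= S -> supn b <= S -> supn (cross a b) <= 2 * S ^ 2).
  { intros a b Ha Hb. pose proof (supn_cross_le a b).
    pose proof (supn_nonneg a); pose proof (supn_nonneg b). nra. }
  assert (Htriple : forall a b c, supn a <= S -> supn b <= S -> supn c <= S ->
                    Rabs (triple a b c) <= 6 * S ^ 3).
  { intros a b c Ha Hb Hc. pose proof (Rabs_triple_le a b c).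
    pose proof (supn_nonneg a); pose proof (supn_nonneg b); pose proof (supn_nonneg c).
    assert (supn a * supn b <= S * S) by nra. nra. }
  assert (Hprod : forall a b c d, supn a <= S -> supn b <= S -> supn c <= S -> supn d <= S ->
                  qnorm (prod_lin (cross a b) (cross c d)) <= 8 * S ^ 4).
  { intros a b c d Ha Hb Hc Hd. pose proof (qnorm_prod_lin_le (cross a b) (cross c d)).
    pose proof (Hcross a b Ha Hb); pose proof (Hcross c d Hc Hd).
    pose proof (supn_nonneg (cross a b)); pose proof (supn_nonneg (cross c d)). nra. }
  assert (Hterm : forall t u P, Rabs t <= 6 * S ^ 3 -> Rabs u <= 6 * S ^ 3 ->
                  qnorm P <= 8 * S ^ 4 -> qnorm (qscale (t * u) P) <= 288 * S ^ 10).
  { intros t u P Ht Hu HP. eapply Rle_trans; [apply qnorm_scale_le|].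
    rewrite Rabs_mult. pose proof (Rabs_pos t); pose proof (Rabs_pos u).
    pose proof (qnorm_nonneg P). assert (Rabs t * Rabs u <= 36 * S ^ 6) by nra. nra. }
  unfold conic5; rewrite Ropp_mult_distr_l.
  replace (576 * S ^ 10) with (288 * S ^ 10 + 288 * S ^ 10) by ring.
  apply qnorm_add_le; apply Hterm; auto using Rabs_opp_le.
Qed.

Definition isZ (x : R) : Prop := exists z : Z, x = IZR z.

Lemma isZ_IZR z : isZ (IZR z). Proof. exists z; reflexivity. Qed.
Lemma isZ_0 : isZ 0. Proof. exists 0%Z; reflexivity. Qed.
Lemma isZ_1 : isZ 1. Proof. exists 1%Z; reflexivity. Qed.

Lemma isZ_add x y : isZ x -> isZ y -> isZ (x + y).
Proof. intros [a ->] [b ->]; exists (a + b)%Z; symmetry; apply plus_IZR. Qed.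

Lemma isZ_sub x y : isZ x -> isZ y -> isZ (x - y).
Proof. intros [a ->] [b ->]; exists (a - b)%Z; symmetry; apply minus_IZR. Qed.

Lemma isZ_mul x y : isZ x -> isZ y -> isZ (x * y).
Proof. intros [a ->] [b ->]; exists (a * b)%Z; symmetry; apply mult_IZR. Qed.

Lemma isZ_opp x : isZ x -> isZ (- x).
Proof. intros [a ->]; exists (- a)%Z; symmetry; apply opp_IZR. Qed.

Lemma isZ_abs_ge1 x : isZ x -> x <> 0 -> 1 <= Rabs x.
Proof.
  intros [z ->] Hz. rewrite <- abs_IZR. apply IZR_le.
  assert (z <> 0%Z) by (intros ->; apply Hz; reflexivity). lia.
Qed.

Ltac isZ_closure :=
  repeat first [ apply isZ_add | apply isZ_sub | apply isZ_mul | apply isZ_opp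
               | apply isZ_1 | assumption ].

Definition int_vec (v : vec) : Prop := let '(x, y, z) := v in isZ x /\ isZ y /\ isZ z.

Lemma integral_of_isZ A :
  isZ (c11 A) -> isZ (c22 A) -> isZ (c33 A) -> isZ (c12 A) -> isZ (c13 A) -> isZ (c23 A) ->
  integral A.
Proof.
  destruct A; simpl; intros [a ->] [b ->] [c ->] [d ->] [e ->] [f ->].
  exists a, b, c, d, e, f; reflexivity.
Qed.

Lemma isZ_qeval X p : integral X -> int_vec p -> isZ (qeval X p).
Proof.
  intros (a & b & c & d & e & f & ->).
  destruct p as [[x y] z]; intros (? & ? & ?); simpl.
  pose proof (isZ_IZR a); pose proof (isZ_IZR b); pose proof (isZ_IZR c).
  pose proof (isZ_IZR d); pose proof (isZ_IZR e); pose proof (isZ_IZR f).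
  isZ_closure.
Qed.

Lemma conic5_integral a1 a2 a3 a4 a5 :
  int_vec a1 -> int_vec a2 -> int_vec a3 -> int_vec a4 -> int_vec a5 ->
  integral (conic5 a1 a2 a3 a4 a5).
Proof.
  split_vecs; simpl; intros (? & ? & ?) (? & ? & ?) (? & ? & ?) (? & ? & ?) (? & ? & ?).
  apply integral_of_isZ; simpl; unfold triple; simpl; isZ_closure.
Qed.

Definition test_points : list vec :=
  [(1, 0, 0); (0, 1, 0); (0, 0, 1); (1, 1, 0); (1, 0, 1); (0, 1, 1)].

Lemma qform_eq0_of_test_points X :
  (forall p, In p test_points -> qeval X p = 0) -> X = qzero.
Proof.
  intros H. destruct X as [q1 q2 q3 q4 q5 q6].
  assert (E : forall n p, nth_error test_points n = Some p -> qeval (QF q1 q2 q3 q4 q5 q6) p = 0)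
    by (intros n p Hn; apply H, (nth_error_In _ n), Hn).
  pose proof (E 0%nat _ eq_refl); pose proof (E 1%nat _ eq_refl); pose proof (E 2%nat _ eq_refl);
  pose proof (E 3%nat _ eq_refl); pose proof (E 4%nat _ eq_refl); pose proof (E 5%nat _ eq_refl).
  simpl in *. apply qform_ext; simpl; lra.
Qed.

Lemma test_points_small p : In p test_points -> int_vec p /\ supn p <= 1.
Proof.
  simpl; intros Hp; repeat destruct Hp as [<- | Hp]; try contradiction;
    (split; [repeat split; auto using isZ_0, isZ_1
            | apply supn_le; rewrite ?Rabs_R0, ?Rabs_R1; lra]).
Qed.

Lemma exists_small_int_point X : X <> qzero ->
  exists p, int_vec p /\ supn p <= 1 /\ qeval X p <> 0.
Proof.
  intros HX. apply NNPP; intros Hno. apply HX, qform_eq0_of_test_points.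
  intros p Hp. apply NNPP; intros Hne. apply Hno.
  exists p; destruct (test_points_small p Hp); auto.
Qed.

(** * Approximating [Q] by an integral conic *)

Definition small_value_point (Q : qform) (S eps : R) (w : vec) : Prop :=
  int_vec w /\ supn w <= S /\ Rabs (qeval Q w) <= eps.

Lemma qsub_scale_div Q C x b : b <> 0 ->
  qsub Q (qscale (x / b) C) = qscale (- / b) (qsub (qscale x C) (qscale b Q)).
Proof. intros Hb; apply qform_ext; simpl; field; exact Hb. Qed.

Lemma conic5_approx Q S eps w1 w2 w3 w4 w5 :
  1 <= S ->
  small_value_point Q S eps w1 -> small_value_point Q S eps w2 ->
  small_value_point Q S eps w3 -> small_value_point Q S eps w4 ->
  small_value_point Q S eps w5 ->
  conic5 w1 w2 w3 w4 w5 <> qzero ->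
  exists lam, qnorm (qsub Q (qscale lam (conic5 w1 w2 w3 w4 w5))) <= 2880 * S ^ 10 * eps.
Proof.
  intros HS (Z1 & B1 & E1) (Z2 & B2 & E2) (Z3 & B3 & E3) (Z4 & B4 & E4) (Z5 & B5 & E5) HC.
  destruct (exists_small_int_point _ HC) as (p & Zp & Bp & Hp).
  assert (Hb : 1 <= Rabs (qeval (conic5 w1 w2 w3 w4 w5) p))
    by (apply isZ_abs_ge1; [apply isZ_qeval; [apply conic5_integral|]|]; assumption).
  exists (qeval Q p / qeval (conic5 w1 w2 w3 w4 w5) p).
  rewrite qsub_scale_div, conic5_interpolation by assumption.
  assert (Hterm : forall w a1 a2 a3 a4 a5, Rabs (qeval Q w) <= eps ->
            supn a1 <= S -> supn a2 <= S -> supn a3 <= S -> supn a4 <= S -> supn a5 <= S ->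
            qnorm (qscale (qeval Q w) (conic5 a1 a2 a3 a4 a5)) <= eps * (576 * S ^ 10)).
  { intros w a1 a2 a3 a4 a5 Hw H1 H2 H3 H4 H5.
    eapply Rle_trans; [apply qnorm_scale_le|].
    apply Rmult_le_compat; auto using Rabs_pos, qnorm_nonneg, qnorm_conic5_le. }
  assert (Hp' : supn p <= S) by lra.
  set (Sum := qadd _ _).
  assert (HSum : qnorm Sum <= 5 * (eps * (576 * S ^ 10))).
  { replace (5 * _) with (eps * (576 * S ^ 10) + (eps * (576 * S ^ 10) + (eps * (576 * S ^ 10)
                         + (eps * (576 * S ^ 10) + eps * (576 * S ^ 10))))) by ring.
    unfold Sum; repeat apply qnorm_add_le; apply Hterm; assumption. }
  eapply Rle_trans; [apply qnorm_scale_le|].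
  rewrite Rabs_Ropp, Rabs_inv.
  assert (/ Rabs (qeval (conic5 w1 w2 w3 w4 w5) p) <= 1)
    by (rewrite <- Rinv_1; apply Rinv_le_contravar; lra).
  pose proof (qnorm_nonneg Sum). pose proof (Rinv_0_lt_compat _ (Rlt_le_trans 0 1 _ Rlt_0_1 Hb)).
  nra.
Qed.

(** * Normalising the determinant *)

Lemma cbrt_cube x : cbrt x ^ 3 = x.
Proof.
  assert (Hroot : forall y, 0 < y -> Rpower y (1 / 3) ^ 3 = y).
  { intros y Hy. rewrite <- Rpower_pow by apply exp_pos.
    rewrite Rpower_mult; simpl INR.
    replace (1 / 3 * (1 + 1 + 1)) with 1 by field. apply Rpower_1; exact Hy. }
  unfold cbrt; destruct (Rlt_dec 0 x); [now apply Hroot|].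
  destruct (Rlt_dec x 0); [|simpl; lra].
  replace ((- Rpower (- x) (1 / 3)) ^ 3) with (- (Rpower (- x) (1 / 3) ^ 3)) by ring.
  rewrite Hroot; lra.
Qed.

Lemma qdet_scale k X : qdet (qscale k X) = k ^ 3 * qdet X.
Proof. destruct X; unfold qdet; simpl; field. Qed.

Lemma cube_near_one t d : Rabs (t ^ 3 - 1) <= d -> d <= 1 / 2 ->
  t <> 0 /\ Rabs ((t - 1) / t) <= 4 * d.
Proof.
  intros H Hd.
  assert (Hq : 3 / 4 <= t ^ 2 + t + 1) by (pose proof (pow2_ge_0 (t + 1 / 2)); nra).
  replace (t ^ 3 - 1) with ((t - 1) * (t ^ 2 + t + 1)) in H by ring.
  rewrite Rabs_mult, (Rabs_right (t ^ 2 + t + 1)) in H by lra.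
  pose proof (Rabs_pos (t - 1)).
  assert (Ht1 : Rabs (t - 1) <= 4 / 3 * d) by nra.
  assert (Ht : 1 / 3 <= Rabs t).
  { pose proof (Rabs_triang_inv 1 t) as Htri.
    rewrite Rabs_R1, (Rabs_minus_sym 1 t) in Htri; lra. }
  split; [intros Ht0; rewrite Ht0, Rabs_R0 in Ht; lra|].
  unfold Rdiv; rewrite Rabs_mult, Rabs_inv.
  apply (Rmult_le_reg_r (Rabs t)); [lra|].
  rewrite Rmult_assoc, Rinv_l by lra. nra.
Qed.

Lemma prod3_sub_le x y z x' y' z' T h :
  1 <= T -> 0 <= h <= 1 -> Rabs x <= T -> Rabs y <= T -> Rabs z <= T ->
  Rabs (x - x') <= h -> Rabs (y - y') <= h -> Rabs (z - z') <= h ->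
  Rabs (x' * y' * z' - x * y * z) <= 7 * T ^ 2 * h.
Proof.
  intros.
  replace (x' * y' * z' - x * y * z) with
    (- ((x - x') * y * z + x * (y - y') * z + x * y * (z - z')
        - (x - x') * (y - y') * z - (x - x') * y * (z - z') - x * (y - y') * (z - z')
        + (x - x') * (y - y') * (z - z'))) by ring.
  abs_bound.
  assert (h * h <= T * h) by nra. assert (h * h * h <= T * T * h) by nra. nra.
Qed.

Lemma Rabs_half_le u s : Rabs u <= s -> Rabs (u / 2) <= s.
Proof.
  intros Hu. unfold Rdiv; rewrite Rabs_mult, Rabs_inv, (Rabs_right 2) by lra.
  pose proof (Rabs_pos u); lra.
Qed.

Lemma qdet_sub_le A B T h : 1 <= T -> 0 <= h <= 1 -> qnorm A <= T -> qnorm (qsub A B) <= h ->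
  Rabs (qdet B - qdet A) <= 42 * T ^ 2 * h.
Proof.
  intros HT Hh HA HAB.
  destruct (qnorm_coefs A) as (A1 & A2 & A3 & A4 & A5 & A6).
  destruct (qnorm_coefs (qsub A B)) as (B1 & B2 & B3 & B4 & B5 & B6).
  assert (HTA : forall x, Rabs x <= qnorm A -> Rabs x <= T) by (intros; lra).
  assert (HTB : forall x, Rabs x <= qnorm (qsub A B) -> Rabs x <= h) by (intros; lra).
  apply HTA in A1, A2, A3, A4, A5, A6; apply HTB in B1, B2, B3, B4, B5, B6.
  clear HA HAB HTA HTB.
  destruct A as [a b c d e f], B as [a' b' c' d' e' f']; simpl in *.
  assert (Hhalf : forall u u', Rabs (u - u') <= h -> Rabs (u / 2 - u' / 2) <= h).
  { intros u u' Hu. replace (u / 2 - u' / 2) with ((u - u') / 2) by field.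
    now apply Rabs_half_le. }
  assert (P1 : Rabs (a' * b' * c' - a * b * c) <= 7 * T ^ 2 * h)
    by (apply prod3_sub_le; auto).
  assert (P2 : Rabs (d' / 2 * (e' / 2) * (f' / 2) - d / 2 * (e / 2) * (f / 2)) <= 7 * T ^ 2 * h)
    by (apply prod3_sub_le; auto using Rabs_half_le).
  assert (P3 : Rabs (a' * (f' / 2) * (f' / 2) - a * (f / 2) * (f / 2)) <= 7 * T ^ 2 * h)
    by (apply prod3_sub_le; auto using Rabs_half_le).
  assert (P4 : Rabs (c' * (d' / 2) * (d' / 2) - c * (d / 2) * (d / 2)) <= 7 * T ^ 2 * h)
    by (apply prod3_sub_le; auto using Rabs_half_le).
  assert (P5 : Rabs (b' * (e' / 2) * (e' / 2) - b * (e / 2) * (e / 2)) <= 7 * T ^ 2 * h)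
    by (apply prod3_sub_le; auto using Rabs_half_le).
  unfold qdet; simpl.
  replace (_ - _) with
    (- (a' * b' * c' - a * b * c)
     - (d' / 2 * (e' / 2) * (f' / 2) - d / 2 * (e / 2) * (f / 2))
     - (d' / 2 * (e' / 2) * (f' / 2) - d / 2 * (e / 2) * (f / 2))
     + (a' * (f' / 2) * (f' / 2) - a * (f / 2) * (f / 2))
     + (c' * (d' / 2) * (d' / 2) - c * (d / 2) * (d / 2))
     + (b' * (e' / 2) * (e' / 2) - b * (e / 2) * (e / 2))) by ring.
  abs_bound. lra.
Qed.

Lemma rescale_unit_det Q Q' lam T E :
  1 <= T -> qnorm Q <= T -> qdet Q = 1 -> 0 <= E -> 84 * T ^ 2 * E <= 1 ->
  qnorm (qsub Q (qscale lam Q')) <= E ->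
  qdet Q' <> 0 /\ qnorm (qsub Q (qscale (cbrt (/ qdet Q')) Q')) <= (1 + 336 * T ^ 3) * E.
Proof.
  intros HT HQ HdQ HE HET Hclose.
  assert (HT2 : 1 <= T ^ 2) by nra.
  set (del := 42 * T ^ 2 * E).
  assert (Hdel : del <= 1 / 2) by (unfold del; lra).
  assert (Hdet : Rabs (lam ^ 3 * qdet Q' - 1) <= del).
  { rewrite <- qdet_scale, <- HdQ. apply qdet_sub_le; auto; nra. }
  assert (Hd0 : qdet Q' <> 0).
  { intros H0; rewrite H0, Rmult_0_r, Rminus_0_l, Rabs_Ropp, Rabs_R1 in Hdet; lra. }
  split; [exact Hd0|].
  set (rho := cbrt (/ qdet Q')).
  assert (Hrho3 : rho ^ 3 = / qdet Q') by apply cbrt_cube.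
  assert (Hrho : rho <> 0).
  { intros H0; rewrite H0 in Hrho3; apply (Rinv_neq_0_compat _ Hd0); rewrite <- Hrho3; ring. }
  (* Since qdet Q = 1, t ^ 3 = qdet (lam Q') is close to 1, hence so is t. *)
  set (t := lam / rho).
  assert (Ht3 : t ^ 3 = lam ^ 3 * qdet Q').
  { unfold t, Rdiv; rewrite Rpow_mult_distr, pow_inv, Hrho3, Rinv_inv; reflexivity. }
  destruct (cube_near_one t del) as (Ht0 & Hratio); [rewrite Ht3; exact Hdet | exact Hdel|].
  assert (Hlam : qnorm (qscale lam Q') <= 2 * T).
  { pose proof (qnorm_le_sub Q (qscale lam Q')); nra. }
  replace (qsub Q (qscale rho Q'))
    with (qadd (qsub Q (qscale lam Q')) (qscale ((t - 1) / t) (qscale lam Q'))).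
  2: { assert (Hlr : lam = t * rho) by (unfold t; field; exact Hrho).
       rewrite Hlr; apply qform_ext; simpl; field; exact Ht0. }
  replace ((1 + 336 * T ^ 3) * E) with (E + 4 * del * (2 * T)) by (unfold del; ring).
  apply qnorm_add_le; [exact Hclose|].
  eapply Rle_trans; [apply qnorm_scale_le|].
  apply Rmult_le_compat; auto using Rabs_pos, qnorm_nonneg.
Qed.

Lemma dioph_conic5_bound M c Q S eps w1 w2 w3 w4 w5 :
  0 <= M -> 0 < c ->
  (forall Q', integral Q' -> Q' <> qzero -> qdet Q' <> 0 ->
     qnorm (qsub Q (qscale (cbrt (/ qdet Q')) Q')) > c * Rpower (qnorm Q') (- M)) ->
  qdet Q = 1 -> 1 <= S ->
  small_value_point Q S eps w1 -> small_value_point Q S eps w2 ->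
  small_value_point Q S eps w3 -> small_value_point Q S eps w4 ->
  small_value_point Q S eps w5 ->
  general_position5 w1 w2 w3 w4 w5 ->
  84 * (qnorm Q + 1) ^ 2 * (2880 * S ^ 10 * eps) <= 1 ->
  c * Rpower (576 * S ^ 10) (- M) < (1 + 336 * (qnorm Q + 1) ^ 3) * (2880 * S ^ 10 * eps).
Proof.
  intros HM Hc Hdio HdQ HS W1 W2 W3 W4 W5 Hgp Hsmall.
  set (C := conic5 w1 w2 w3 w4 w5).
  assert (HC : C <> qzero) by (apply conic5_neq0; exact Hgp).
  destruct (conic5_approx Q S eps w1 w2 w3 w4 w5 HS W1 W2 W3 W4 W5 HC) as [lam Hlam].
  destruct W1 as (Z1 & B1 & E1), W2 as (Z2 & B2 & _), W3 as (Z3 & B3 & _),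
    W4 as (Z4 & B4 & _), W5 as (Z5 & B5 & _).
  assert (Heps : 0 <= 2880 * S ^ 10 * eps).
  { pose proof (Rabs_pos (qeval Q w1)). assert (0 <= S ^ 10) by (apply pow_le; lra). nra. }
  destruct (rescale_unit_det Q C lam (qnorm Q + 1) (2880 * S ^ 10 * eps))
    as (Hdet & Hrho); auto; try (pose proof (qnorm_nonneg Q); lra).
  pose proof (Hdio C (conic5_integral _ _ _ _ _ Z1 Z2 Z3 Z4 Z5) HC Hdet) as Hlow.
  assert (Hmono : Rpower (576 * S ^ 10) (- M) <= Rpower (qnorm C) (- M)).
  { apply Rpower_le_base_nonpos; [split|lra].
    - now apply qnorm_pos.
    - now apply qnorm_conic5_le. }
  apply (Rmult_le_compat_l c) in Hmono; lra.
Qed.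

Definition adj (g : mat3) : mat3 :=
  let '((a, b, c), (d, e, f), (h, i, j)) := g in
  ((e * j - f * i, c * i - b * j, b * f - c * e),
   (f * h - d * j, a * j - c * h, c * d - a * f),
   (d * i - e * h, b * h - a * i, a * e - b * d)).

Definition mabs_sum (g : mat3) : R :=
  let '((a, b, c), (d, e, f), (h, i, j)) := g in
  Rabs a + Rabs b + Rabs c + Rabs d + Rabs e + Rabs f + Rabs h + Rabs i + Rabs j.

Lemma mapply_adj g x y z :
  mapply (adj g) (mapply g (x, y, z)) = (det3 g * x, det3 g * y, det3 g * z).
Proof. split_vecs; simpl; f_equal; [f_equal|]; ring. Qed.

Lemma mapply_adj_cancel g w : det3 g = 1 -> mapply (adj g) (mapply g w) = w.
Proof. intros Hg; destruct w as [[x y] z]; rewrite mapply_adj, Hg, !Rmult_1_l; reflexivity. Qed.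

Ltac abs_pos_facts :=
  repeat match goal with
  | |- context [Rabs ?x] =>
      lazymatch goal with
      | _ : 0 <= Rabs x |- _ => fail
      | _ => pose proof (Rabs_pos x)
      end
  end.

Lemma mabs_sum_nonneg g : 0 <= mabs_sum g.
Proof. split_vecs; simpl; abs_pos_facts; lra. Qed.

Lemma supn_mapply_le g v : supn (mapply g v) <= mabs_sum g * supn v.
Proof.
  pose proof (supn_nonneg v).
  destruct g as [[[[a b] c] [[d e] f]] [[h i] j]], v as [[x y] z]; supn_coords_all.
  simpl mapply; simpl dot; simpl mabs_sum.
  apply supn_le; abs_bound; abs_pos_facts; nra.
Qed.

Definition preimage_factor (g : mat3) : R := 1 + mabs_sum (adj g).

Definition lattice_window (g : mat3) (eta M Rr : R) (v : vec) : Prop :=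
  in_lattice g v /\ in_H eta M v /\ Rr <= supn v < Rr ^ 2.

Lemma lattice_window_preimage M Q g eta Rr v :
  det3 g = 1 -> (forall u, qeval Q u = Q0 (mapply g u)) -> 0 <= M -> 0 < Rr ->
  lattice_window g eta M Rr v ->
  exists w, v = mapply g w /\
    small_value_point Q (preimage_factor g * Rr ^ 2) (eta * Rpower Rr (- (50 * M))) w.
Proof.
  intros Hg HQ HM HR ((a & b & c & ->) & HH & Hlo & Hhi).
  exists (IZR a, IZR b, IZR c); split; [reflexivity|].
  repeat split; try apply isZ_IZR.
  - rewrite <- (mapply_adj_cancel g (IZR a, IZR b, IZR c) Hg) at 1.
    eapply Rle_trans; [apply supn_mapply_le|].
    pose proof (mabs_sum_nonneg (adj g)); unfold preimage_factor; nra.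
  - rewrite HQ; unfold in_H in HH.
    set (v := mapply g (IZR a, IZR b, IZR c)) in *.
    assert (Hpos : 0 < Rpower (supn v) (- (50 * M))) by apply exp_pos.
    assert (Hpow : Rpower (supn v) (- (50 * M)) <= Rpower Rr (- (50 * M)))
      by (apply Rpower_le_base_nonpos; lra).
    pose proof (Rabs_pos (Q0 v)). nra.
Qed.

Lemma general_position5_of_mapply g a1 a2 a3 a4 a5 :
  general_position5 (mapply g a1) (mapply g a2) (mapply g a3) (mapply g a4) (mapply g a5) ->
  general_position5 a1 a2 a3 a4 a5.
Proof.
  assert (Hr : forall x y : R, x * y <> 0 -> y <> 0) by (intros x y H ->; apply H; ring).
  unfold general_position5; rewrite !triple_mapply.
  intros (? & ? & ? & ? & ? & ? & ? & ? & ? & ?); repeat split; eapply Hr; eassumption.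
Qed.

Lemma Rpower_window_height G Rr M : 0 < G -> 1 <= Rr -> 2 / 3 <= M ->
  (G * Rr ^ 2) ^ 10 * Rpower Rr (- (50 * M)) <= G ^ 10 * Rpower Rr (- (20 * M)) /\
  Rpower (576 * (G * Rr ^ 2) ^ 10) (- M) = Rpower (576 * G ^ 10) (- M) * Rpower Rr (- (20 * M)).
Proof.
  intros HG HR HM.
  assert (H20 : (G * Rr ^ 2) ^ 10 = G ^ 10 * Rpower Rr 20).
  { rewrite Rpow_mult_distr, <- pow_mult, <- (Rpower_pow (2 * 10) Rr) by lra.
    f_equal; f_equal; simpl; ring. }
  rewrite H20; split.
  - rewrite Rmult_assoc, <- Rpower_plus.
    apply Rmult_le_compat_l; [apply pow_le; lra|].
    apply Rle_Rpower; lra.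
  - rewrite <- Rmult_assoc, <- Rpower_mult_distr, Rpower_mult.
    + f_equal; f_equal; ring.
    + assert (0 < G ^ 10) by (apply pow_lt; lra); lra.
    + apply exp_pos.
Qed.

Section DiophantineWindow.

Variables (M c : R) (Q : qform) (g : mat3).
Hypothesis HM : 1 < M.
Hypothesis Hc : 0 < c.
Hypothesis Hg : det3 g = 1.
Hypothesis HQ : forall v, qeval Q v = Q0 (mapply g v).
Hypothesis HdQ : qdet Q = 1.
Hypothesis Hdio : forall Q', integral Q' -> Q' <> qzero -> qdet Q' <> 0 ->
  qnorm (qsub Q (qscale (cbrt (/ qdet Q')) Q')) > c * Rpower (qnorm Q') (- M).

Let T := qnorm Q + 1.
Let K := 2880 * preimage_factor g ^ 10.
Let K1 := Rpower (576 * preimage_factor g ^ 10) (- M).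

Lemma no_general_five_window eta Rr :
  0 < eta -> 1 <= Rr -> 84 * T ^ 2 * K * eta < 1 -> (1 + 336 * T ^ 3) * K * eta < c * K1 ->
  no_general_five (lattice_window g eta M Rr).
Proof.
  intros Heta HR HA HB v1 v2 v3 v4 v5 P1 P2 P3 P4 P5 Hgp.
  destruct (lattice_window_preimage M Q g eta Rr v1) as (w1 & -> & W1); auto; try lra.
  destruct (lattice_window_preimage M Q g eta Rr v2) as (w2 & -> & W2); auto; try lra.
  destruct (lattice_window_preimage M Q g eta Rr v3) as (w3 & -> & W3); auto; try lra.
  destruct (lattice_window_preimage M Q g eta Rr v4) as (w4 & -> & W4); auto; try lra.
  destruct (lattice_window_preimage M Q g eta Rr v5) as (w5 & -> & W5); auto; try lra.
  apply general_position5_of_mapply in Hgp.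
  set (G := preimage_factor g) in *.
  assert (HG : 1 <= G) by (pose proof (mabs_sum_nonneg (adj g)); unfold G, preimage_factor; lra).
  destruct (Rpower_window_height G Rr M) as (Hheight & Hsplit); try lra.
  set (X := Rpower Rr (- (20 * M))) in *.
  assert (HX : 0 < X <= 1).
  { split; [apply exp_pos|].
    rewrite <- (Rpower_O Rr) by lra. apply Rle_Rpower; lra. }
  set (E := 2880 * (G * Rr ^ 2) ^ 10 * (eta * Rpower Rr (- (50 * M)))).
  assert (HE : E <= K * eta * X) by (unfold E, K; nra).
  assert (0 <= T ^ 2) by apply pow2_ge_0.
  assert (0 <= T ^ 3) by (apply pow_le; unfold T; pose proof (qnorm_nonneg Q); lra).
  pose proof (dioph_conic5_bound M c Q (G * Rr ^ 2) (eta * Rpower Rr (- (50 * M)))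
                w1 w2 w3 w4 w5) as Hlt.
  rewrite Hsplit in Hlt. fold K1 T E in Hlt.
  assert (c * (K1 * X) < (1 + 336 * T ^ 3) * E) by (apply Hlt; auto; try lra; nra).
  nra.
Qed.

Lemma exists_eta_no_general_five :
  exists eta, 0 < eta < 1 /\ forall Rr, 1 <= Rr -> no_general_five (lattice_window g eta M Rr).
Proof.
  assert (HT : 1 <= T) by (pose proof (qnorm_nonneg Q); unfold T; lra).
  assert (HG : 1 <= preimage_factor g)
    by (pose proof (mabs_sum_nonneg (adj g)); unfold preimage_factor; lra).
  assert (HK : 0 < K) by (unfold K; assert (0 < preimage_factor g ^ 10) by (apply pow_lt; lra); lra).
  assert (HK1 : 0 < K1) by apply exp_pos.
  assert (0 <= T ^ 2) by apply pow2_ge_0. assert (0 <= T ^ 3) by (apply pow_le; lra).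
  destruct (exists_small_pos (84 * T ^ 2 * K) ((1 + 336 * T ^ 3) * K / (c * K1)))
    as (eta & Heta & HA & HB); [nra | apply Rle_mult_inv_pos; nra|].
  exists eta; split; [exact Heta|]; intros Rr HR.
  apply no_general_five_window; try lra.
  apply (Rmult_lt_reg_r (/ (c * K1))); [apply Rinv_0_lt_compat; nra|].
  rewrite Rinv_r by nra. unfold Rdiv in HB; lra.
Qed.

End DiophantineWindow.

(** * Covering by planes *)

Definition planes_cover (ns : list vec) (P : vec -> Prop) : Prop :=
  Forall (fun n => n <> vzero) ns /\ forall v, P v -> exists n, In n ns /\ dot n v = 0.

Lemma on_some_plane_by_contra (ns : list vec) v :
  ((forall n, In n ns -> dot n v <> 0) -> False) -> exists n, In n ns /\ dot n v = 0.
Proof.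
  intros H. apply NNPP; intros Hno. apply H; intros n Hn Hz. apply Hno; eauto.
Qed.

Lemma plane_of_no_triple (P : vec -> Prop) :
  (forall a b c, P a -> P b -> P c -> triple a b c = 0) -> exists n, planes_cover [n] P.
Proof.
  intros Hflat.
  destruct (classic (exists a, P a /\ a <> vzero)) as [(a & Pa & Ha) | Hzero].
  2: { exists (1, 0, 0); split.
       { constructor; [|constructor]. intros H; injection H; intros; lra. }
       intros v Pv; exists (1, 0, 0); split; [now left|].
       assert (v = vzero) by (apply NNPP; eauto); subst v; simpl; ring. }
  destruct (classic (exists b, P b /\ cross a b <> vzero)) as [(b & Pb & Hab) | Hline].
  - exists (cross a b); split; [repeat constructor; exact Hab|].
    intros v Pv; exists (cross a b); split; [now left | exact (Hflat a b v Pa Pb Pv)].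
  - destruct (cross_neq0_exists a Ha) as [e He].
    exists (cross a e); split; [repeat constructor; exact He|].
    intros v Pv; exists (cross a e); split; [now left|].
    apply triple_eq0_of_cross_eq0, NNPP; eauto.
Qed.

Lemma planes_cover_of_no_general_five P :
  no_general_five P -> exists ns, (length ns <= 6)%nat /\ planes_cover ns P.
Proof.
  intros Hno.
  destruct (classic (exists a1 a2 a3, P a1 /\ P a2 /\ P a3 /\ triple a1 a2 a3 <> 0))
    as [(a1 & a2 & a3 & P1 & P2 & P3 & H123) | Hflat].
  2: { destruct (plane_of_no_triple P) as [n Hn].
       - intros a b c Pa Pb Pc; apply NNPP; intros H; apply Hflat; exists a, b, c; auto.
       - exists [n]; split; [simpl; lia | exact Hn]. }
  destruct (triple_neq0_cross _ _ _ H123) as (N12 & N13 & N23).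
  destruct (classic (exists a4, P a4 /\ triple a1 a2 a4 <> 0 /\ triple a1 a3 a4 <> 0 /\
                                triple a2 a3 a4 <> 0))
    as [(a4 & P4 & H124 & H134 & H234) | Hno4].
  - destruct (triple_neq0_cross _ _ _ H124) as (_ & N14 & N24).
    destruct (triple_neq0_cross _ _ _ H134) as (_ & _ & N34).
    exists [cross a1 a2; cross a1 a3; cross a1 a4; cross a2 a3; cross a2 a4; cross a3 a4].
    split; [simpl; lia|]; split; [repeat constructor; assumption|].
    intros v Pv; apply on_some_plane_by_contra; intros Hoff.
    apply (Hno a1 a2 a3 a4 v); auto.
    repeat split; try assumption; apply Hoff; simpl; tauto.
  - exists [cross a1 a2; cross a1 a3; cross a2 a3].
    split; [simpl; lia|]; split; [repeat constructor; assumption|].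
    intros v Pv; apply on_some_plane_by_contra; intros Hoff.
    apply Hno4; exists v; repeat split; try assumption; apply Hoff; simpl; tauto.
Qed.

Theorem lemma2p4 (M : R) (Q : qform) (g : mat3) :
  1 < M ->
  det3 g = 1 ->
  (forall v : vec, qeval Q v = Q0 (mapply g v)) ->
  indefinite Q ->
  qdet Q = 1 ->
  dioph_type Q M ->
  exists eta : R, 0 < eta < 1 /\
    forall Rr : R, 10 < Rr ->
      exists ns : list vec,
        (length ns <= 6)%nat /\ Forall (fun n => n <> vzero) ns /\
        forall v : vec, in_lattice g v -> in_H eta M v ->
          Rr <= supn v < Rr ^ 2 ->
          exists n, In n ns /\ dot n v = 0.
Proof.
  intros HM Hg HQ _ HdQ (c & Hc & Hdio).
  destruct (exists_eta_no_general_five M c Q g HM Hc Hg HQ HdQ Hdio) as (eta & Heta & Hno).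
  exists eta; split; [exact Heta|].
  intros Rr HR.
  destruct (planes_cover_of_no_general_five _ (Hno Rr ltac:(lra))) as (ns & Hlen & Hnz & Hcov).
  exists ns; split; [exact Hlen|]; split; [exact Hnz|].
  intros v Hv HH HRv; exact (Hcov v (conj Hv (conj HH HRv))).
Qed.
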